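(* Let $R$ be a $*$-reducing ring and let $p,q\in R$ be projections. Then the following are equivalent: (1) $p(1-q)$ is MP invertible; (2) $p-q$ is MP invertible; (3) $(1-p)q$ is MP invertible.
   Context: $R$ is an associative ring with identity $1$ and an involution $a\mapsto a^*$ (satisfying $(a^* )^*=a$, $(a+b)^*=a^*+b^*$, $(ab)^*=b^*a^*$). $R$ is $*$-reducing if $a^*a=0$ implies $a=0$ for all $a\in R$. An element $a$ is MP invertible if there is $b$ with $aba=a$, $bab=b$, $(ab)^*=ab$, $(ba)^*=ba$; this $b$ is unique and written $a^{\dagger}$. A projection is an element $p$ with $p^2=p=p^*$. *)

From mathcomp Require Import all_boot all_algebra.
Set Implicit Arguments. Unset Strict Implicit. Unset Printing Implicit Defensive.
Import GRing.Theory.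
Local Open Scope ring_scope.

Definition involution (R : pzRingType) (star : R -> R) : Prop :=
  [/\ forall a, star (star a) = a,
      forall a b, star (a + b) = star a + star b &
      forall a b, star (a * b) = star b * star a].

Definition star_reducing (R : pzRingType) (star : R -> R) : Prop :=
  forall a, star a * a = 0 -> a = 0.

Definition is_MP_inverse (R : pzRingType) (star : R -> R) (a b : R) : Prop :=
  [/\ a * b * a = a, b * a * b = b, star (a * b) = a * b & star (b * a) = b * a].

Definition MP_invertible (R : pzRingType) (star : R -> R) (a : R) : Prop :=
  exists b, is_MP_inverse star a b.

Definition projection (R : pzRingType) (star : R -> R) (p : R) : Prop :=
  p * p = p /\ star p = p.

From mathcomp Require Import all_boot all_algebra.
Import GRing.Theory.
Set Implicit Arguments. Unset Strict Implicit.
Local Open Scope ring_scope.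

(* In a *-reducing ring, [a] is MP invertible iff [a^* a] has a group inverse [k]
   (and then [a^+ = k a^*]), equivalently iff [a a^*] has one.  For [a = p(1-q)]
   these are [p(1-q)p] and [(1-q)p(1-q)], and the group invertibility of the
   latter transfers to [(1-p)q(1-p)].  Now [(p-q)^*(p-q) = (p-q)^2] is the
   orthogonal sum [p(1-q)p + (1-p)q(1-p)], so it is group invertible when both
   summands are, and compressing it by [p] gives back [p(1-q)p].  The third
   condition reduces to the first for [(q, p)] by taking adjoints. *)

Section GroupInverse.
Variable R : pzRingType.
Implicit Types h k m t P Q : R.

Definition group_inverse h k := [/\ h * k = k * h, h * k * h = h & k * h * k = k].

Definition group_invertible h := exists k, group_inverse h k.

Lemma group_inverse_unique h k k' :
  group_inverse h k -> group_inverse h k' -> k = k'.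
Proof.
move=> [hk hkh khk] [hk' hk'h k'hk'].
have hkE : h * k = h * k * (h * k').
  by rewrite [h * k']hk' hk -!mulrA (mulrA h k') hk'h.
have hk'E : h * k' = h * k * (h * k') by rewrite mulrA hkh.
have e : h * k = h * k' by rewrite hkE -hk'E.
by rewrite -khk -mulrA e mulrA -hk e hk' k'hk'.
Qed.

Lemma group_inverse_commuting_inner h m :
  h * m = m * h -> h * m * h = h -> group_inverse h (m * h * m).
Proof.
move=> hm hmh.
have hmE : h * (m * h * m) = h * m by rewrite !mulrA hmh.
have mhE : m * h * m * h = h * m by rewrite -!mulrA (mulrA h m h) hmh hm.
split.
- by rewrite hmE mhE.
- by rewrite hmE.
- by rewrite mhE hm -[in RHS]hmh !mulrA.
Qed.

Section Properties.
Variables h k : R.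
Hypothesis hk : group_inverse h k.

Lemma group_inverse_lmul_eq x y : x * h = y * h -> x * k = y * k.
Proof.
case: hk => hkC _ khk xy.
by rewrite -khk !mulrA -!(mulrA _ k h) -hkC !mulrA xy.
Qed.

Lemma group_inverse_rmul_eq x y : h * x = h * y -> k * x = k * y.
Proof.
case: hk => hkC _ khk xy.
by rewrite -khk -!mulrA !(mulrA h k) hkC -!mulrA xy.
Qed.

Lemma group_inverse_rann x : h * x = 0 -> k * x = 0.
Proof. by move=> hx; rewrite -(mulr0 k); apply: group_inverse_rmul_eq; rewrite mulr0. Qed.

Lemma group_inverse_lann x : x * h = 0 -> x * k = 0.
Proof. by move=> xh; rewrite -(mul0r k); apply: group_inverse_lmul_eq; rewrite mul0r. Qed.

Lemma group_inverse_commute t : t * h = h * t -> t * k = k * t.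
Proof.
have [hkC hkh _] := hk; move=> th.
have tkE : t * k = h * k * t * k.
  by apply: group_inverse_lmul_eq; rewrite -mulrA th mulrA hkh.
have ktE : k * t = k * t * (k * h).
  by rewrite -mulrA; apply: group_inverse_rmul_eq; rewrite !mulrA -th -!mulrA (mulrA h k h) hkh.
by rewrite tkE ktE -[in RHS]hkC [in LHS]hkC -(mulrA k h t) -th !mulrA.
Qed.

Lemma group_inverse_idem_mull t :
  t * t = t -> t * h = h * t -> group_inverse (t * h) (t * k).
Proof.
move=> tt th; have tk := group_inverse_commute th.
have [hkC hkh khk] := hk.
have tmul x y : x * t = t * x -> t * x * (t * y) = t * (x * y).
  by move=> xt; rewrite -mulrA (mulrA x) xt -mulrA mulrA tt.
have ht := esym th; have kt := esym tk.
have hkt : h * k * t = t * (h * k) by rewrite -mulrA kt !mulrA ht.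
have kht : k * h * t = t * (k * h) by rewrite -hkC.
by split; rewrite !tmul // ?hkh ?khk ?hkC.
Qed.

End Properties.

Lemma group_inverseD h1 h2 k1 k2 :
  h1 * h2 = 0 -> h2 * h1 = 0 -> group_inverse h1 k1 -> group_inverse h2 k2 ->
  group_inverse (h1 + h2) (k1 + k2).
Proof.
move=> h12 h21 g1 g2.
have k1h2 := group_inverse_rann g1 h12; have h2k1 := group_inverse_lann g1 h21.
have k2h1 := group_inverse_rann g2 h21; have h1k2 := group_inverse_lann g2 h12.
have [hkC1 hkh1 khk1] := g1; have [hkC2 hkh2 khk2] := g2.
have hkE : (h1 + h2) * (k1 + k2) = h1 * k1 + h2 * k2.
  by rewrite mulrDl !mulrDr h1k2 h2k1 addr0 add0r.
have khE : (k1 + k2) * (h1 + h2) = k1 * h1 + k2 * h2.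
  by rewrite mulrDl !mulrDr k1h2 k2h1 addr0 add0r.
split.
- by rewrite hkE khE hkC1 hkC2.
- by rewrite hkE mulrDl !mulrDr -!mulrA k1h2 k2h1 !mulr0 addr0 add0r !mulrA hkh1 hkh2.
- by rewrite khE mulrDl !mulrDr -!mulrA h1k2 h2k1 !mulr0 addr0 add0r !mulrA khk1 khk2.
Qed.

(* With [T = P(1-Q)P] and [U = Q(1-P)Q] one has [U P = Q T] and [P U = T Q], so
   [m = Q + Q k Q], for [k] the group inverse of [T], is a commuting inner inverse
   of [U]. *)
Lemma group_invertible_corner_swap P Q :
  P * P = P -> Q * Q = Q ->
  group_invertible (P * (1 - Q) * P) -> group_invertible (Q * (1 - P) * Q).
Proof.
move=> PP QQ [k gk].
set T := P * (1 - Q) * P in gk; set U := Q * (1 - P) * Q.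
have Pk : P * k = k.
  by rewrite -[RHS]mul1r; apply: (group_inverse_lmul_eq gk); rewrite /T !mulrA PP mul1r.
have kP : k * P = k.
  by rewrite -[RHS]mulr1; apply: (group_inverse_rmul_eq gk); rewrite /T -mulrA PP mulr1.
have UQ : U * Q = U by rewrite /U -mulrA QQ.
have QU : Q * U = U by rewrite /U !mulrA QQ.
have UP : U * P = Q * T.
  by rewrite /U /T !mulrA !mulrBr !mulr1 !mulrBl QQ -(mulrA Q P P) PP.
have PU : P * U = T * Q.
  by rewrite /U /T !mulrA !mulrBr !mulr1 !mulrBl PP -(mulrA P Q Q) QQ.
have UU : U * U = U - U * P * Q.
  by rewrite {2}/U !mulrA UQ mulrBr mulr1 mulrBl UQ.
rewrite UP in UU; clearbody T U; have [TkC TkT _] := gk.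
have Uk : U * k = Q * T * k by rewrite -{1}Pk mulrA UP.
have kU : k * U = k * T * Q by rewrite -{1}kP -mulrA PU mulrA.
exists ((Q + Q * k * Q) * U * (Q + Q * k * Q)); apply: group_inverse_commuting_inner.
- rewrite mulrDr mulrDl QU UQ !mulrA UQ Uk.
  by rewrite -(mulrA (Q * k)) QU -(mulrA Q k U) kU -TkC !mulrA.
- rewrite mulrDr UQ !mulrA UQ Uk mulrDl UU -(mulrA _ Q U) QU -(mulrA _ k U) kU.
  by rewrite !mulrA -(mulrA (Q * T) k T) -(mulrA Q T (k * T)) (mulrA T k T) TkT subrK.
Qed.

Lemma idem_compl P : P * P = P -> (1 - P) * (1 - P) = 1 - P.
Proof. by move=> PP; rewrite mulrBr mulr1 mulrBl mul1r PP subrr subr0. Qed.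

Lemma idem_subr_sqr P Q : P * P = P -> Q * Q = Q ->
  (P - Q) * (P - Q) = P * (1 - Q) * P + (1 - P) * Q * (1 - P).
Proof.
move=> PP QQ; rewrite !mulrBl !mulrBr !mulr1 !mul1r PP QQ !mulrBl PP.
by rewrite !opprB [Q - _ + _]addrC [in RHS]addrA subrKA.
Qed.

End GroupInverse.

Section StarRing.
Variables (R : pzRingType) (star : R -> R).

Lemma is_MP_inverseN a x : is_MP_inverse star a x -> is_MP_inverse star (- a) (- x).
Proof.
case=> axa xax ax xa.
by split; rewrite ?mulrNN ?mulrN ?mulNr ?opprK ?axa ?xax ?ax ?xa.
Qed.

Lemma MP_invertibleN a : MP_invertible star (- a) <-> MP_invertible star a.
Proof.
split=> -[x /is_MP_inverseN ax]; last by exists (- x).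
by rewrite opprK in ax; exists (- x).
Qed.

Hypothesis star_inv : involution star.

Lemma starK : involutive star. Proof. by case: star_inv. Qed.

Lemma starD a b : star (a + b) = star a + star b. Proof. by case: star_inv. Qed.

Lemma starM a b : star (a * b) = star b * star a. Proof. by case: star_inv. Qed.

Lemma star0 : star 0 = 0.
Proof. by apply: (addrI (star 0)); rewrite -starD !addr0. Qed.

Lemma starN a : star (- a) = - star a.
Proof. by apply: (addrI (star a)); rewrite -starD !subrr star0. Qed.

Lemma starB a b : star (a - b) = star a - star b.
Proof. by rewrite starD starN. Qed.

Lemma star1 : star 1 = 1.
Proof. by have := starM (star 1) 1; rewrite starK !mulr1 starK => <-. Qed.

Lemma group_inverse_star h k :
  group_inverse h k -> group_inverse (star h) (star k).
Proof.
case=> hkC hkh khk.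
by split; rewrite -!starM ?mulrA ?hkh ?khk ?hkC.
Qed.

Lemma group_inverse_selfadjoint h k : star h = h -> group_inverse h k -> star k = k.
Proof.
move=> sh hk; have := group_inverse_star hk; rewrite sh => /group_inverse_unique.
exact.
Qed.

Lemma is_MP_inverse_star a x :
  is_MP_inverse star a x -> is_MP_inverse star (star a) (star x).
Proof.
case=> axa xax ax xa.
by split; rewrite -!starM ?starK ?mulrA ?axa ?xax ?ax ?xa.
Qed.

Lemma MP_invertible_star a : MP_invertible star (star a) <-> MP_invertible star a.
Proof.
split=> -[x /is_MP_inverse_star ax]; last by exists (star x).
by rewrite starK in ax; exists (star x).
Qed.

Lemma is_MP_inverse_group_inverse a x :
  is_MP_inverse star a x -> group_inverse (star a * a) (x * star x).
Proof.
case=> axa xax ax xa.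
have axE : a * x = star x * star a by rewrite -starM ax.
have xaE : x * a = star a * star x by rewrite -starM xa.
have saxa : star a * star x * star a = star a by rewrite -!starM mulrA axa.
have hkE : star a * a * (x * star x) = x * a.
  by rewrite mulrA -(mulrA _ a) axE !mulrA saxa xaE.
have khE : x * star x * (star a * a) = x * a.
  by rewrite mulrA -(mulrA x) -axE !mulrA xax.
split.
- by rewrite hkE khE.
- by rewrite hkE xaE mulrA saxa.
- by rewrite khE mulrA xax.
Qed.

Hypothesis star_red : star_reducing star.

Lemma group_inverse_is_MP_inverse a k :
  group_inverse (star a * a) k -> is_MP_inverse star a (k * star a).
Proof.
move=> hk; have [hkC hkh khk] := hk.
have sk : star k = k.
  by apply: group_inverse_selfadjoint hk; rewrite starM starK.
have akh : a * (k * (star a * a)) = a.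
  apply/eqP; rewrite -subr_eq0; apply/eqP/star_red.
  have -> : a * (k * (star a * a)) - a = a * (k * (star a * a) - 1).
    by rewrite mulrBr mulr1.
  rewrite starM -mulrA (mulrA (star a)) mulrBr mulr1.
  by rewrite (mulrA (star a * a)) hkh subrr mulr0.
split.
- by rewrite -!mulrA akh.
- by rewrite !mulrA -(mulrA k (star a) a) khk.
- by rewrite !starM starK sk mulrA.
- by rewrite !starM starK sk mulrA hkC mulrA.
Qed.

Lemma MP_invertible_group_invertible a :
  MP_invertible star a <-> group_invertible (star a * a).
Proof.
split=> [[x /is_MP_inverse_group_inverse hk] | [k /group_inverse_is_MP_inverse ax]].
- by exists (x * star x).
- by exists (k * star a).
Qed.

Lemma MP_invertible_group_invertible_r a :
  MP_invertible star a <-> group_invertible (a * star a).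
Proof.
apply: iff_trans (iff_sym (MP_invertible_star a)) _.
by rewrite -{2}[a]starK; apply: MP_invertible_group_invertible.
Qed.

Lemma MP_invertible_proj_mul_compl p q :
  projection star p -> projection star q ->
  MP_invertible star (p * (1 - q)) <-> MP_invertible star (p - q).
Proof.
move=> [pp sp] [qq sq]; have pp' := idem_compl pp; have qq' := idem_compl qq.
have pc : p * (1 - p) = 0 by rewrite mulrBr mulr1 pp subrr.
have cp : (1 - p) * p = 0 by rewrite mulrBl mul1r pp subrr.
have sa : star (p * (1 - q)) = (1 - q) * p by rewrite starM starB star1 sp sq.
have aa : p * (1 - q) * star (p * (1 - q)) = p * (1 - q) * p.
  by rewrite sa mulrA -(mulrA p) qq'.
have saa : star (p * (1 - q)) * (p * (1 - q)) = (1 - q) * p * (1 - q).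
  by rewrite sa mulrA -(mulrA _ p p) pp.
have sqr : star (p - q) * (p - q) = p * (1 - q) * p + (1 - p) * q * (1 - p).
  by rewrite starB sp sq idem_subr_sqr.
split.
- move=> Ha.
  have [k1 g1] : group_invertible (p * (1 - q) * p).
    by rewrite -aa; apply/MP_invertible_group_invertible_r.
  have [k2 g2] : group_invertible ((1 - p) * q * (1 - p)).
    have := group_invertible_corner_swap qq' pp'; rewrite !subKr; apply.
    by rewrite -saa; apply/MP_invertible_group_invertible.
  apply/MP_invertible_group_invertible; rewrite sqr; exists (k1 + k2).
  apply: group_inverseD g1 g2.
  + by rewrite -!mulrA (mulrA p (1 - p)) pc !mul0r !mulr0.
  + by rewrite -!mulrA (mulrA (1 - p) p) cp !mul0r !mulr0.
- move/MP_invertible_group_invertible; rewrite sqr => -[k gk].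
  apply/MP_invertible_group_invertible_r; rewrite aa.
  have ph : p * (p * (1 - q) * p + (1 - p) * q * (1 - p)) = p * (1 - q) * p.
    by rewrite mulrDr !mulrA pp pc !mul0r addr0.
  have hp : (p * (1 - q) * p + (1 - p) * q * (1 - p)) * p = p * (1 - q) * p.
    by rewrite mulrDl -!mulrA pp cp !mulr0 addr0.
  by exists (p * k); rewrite -ph; apply: (group_inverse_idem_mull gk pp); rewrite ph hp.
Qed.

End StarRing.

Theorem corollary2p8 (R : pzRingType) (star : R -> R)
  (Hinv : involution star) (Hred : star_reducing star) (p q : R)
  (Hp : projection star p) (Hq : projection star q) :
  (MP_invertible star (p * (1 - q)) <-> MP_invertible star (p - q)) /\
  (MP_invertible star (p - q) <-> MP_invertible star ((1 - p) * q)).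
Proof.
split; first exact: MP_invertible_proj_mul_compl.
have adj : star ((1 - p) * q) = q * (1 - p).
  by rewrite (starM Hinv) (starB Hinv) (star1 Hinv) Hp.2 Hq.2.
apply: iff_trans (iff_sym (MP_invertibleN _ _)) _; rewrite opprB.
apply: iff_trans (iff_sym (MP_invertible_proj_mul_compl Hinv Hred Hq Hp)) _.
by rewrite -adj; apply: MP_invertible_star.
Qed.
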